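(* Let $\sigma\in\{\textsf{Sup},\textsf{KK},\textsf{PSt},\textsf{St},\textsf{WF}\}$, let $\mathcal T$ be a permaconsistent distributed theory, and let $\mathcal B$ be a distributed belief pair (for $\sigma\in\{\textsf{Sup},\textsf{St}\}$, $\mathcal B$ ranges over exact pairs $(\mathcal Q,\mathcal Q)$, identified with the DPWS $\mathcal Q$, and $\tau_{\mathit{beliefpair}}((\mathcal Q,\mathcal Q))$ is identified with the PWS $\tau_{\mathit{pws}}(\mathcal Q)$). Then $\mathcal B$ is a $\sigma$-model of $\mathcal T$ if and only if $\tau_{\mathit{beliefpair}}(\mathcal B)$ is a $\sigma$-model of the AEL theory $\tau_{\mathit{theory}}(\mathcal T)$.
   Context: Standing setup (dAEL). $\Sigma=\Sigma_o\uplus\Sigma_s$ is a first-order vocabulary (objective and subjective symbols). A nonempty domain $D$ and a $\Sigma_o$-structure $I_o$ with domain $D$ are fixed, as is a set of agents $\mathcal{A}\subseteq D$. For each $A\in\mathcal{A}$ there is a constant $A\in\Sigma_o$ with $A^{I_o}=A$, and $\Sigma_o$ contains a unary predicate $\mathrm{Apred}$ with $\mathrm{Apred}^{I_o}=\mathcal{A}$. ''Structure'' means a $\Sigma$-structure with domain $D$ that agrees with $I_o$ on $\Sigma_o$. Formulas of dAEL are built from atoms $P(\bar t)$ ($P\in\Sigma$ or equality) using $\wedge,\neg,\forall x$, and the modal rule: if $\varphi$ is a formula and $t$ a term then $K_t\varphi$ is a formula ($\vee,\Rightarrow,\Leftrightarrow,\exists$ are the usual abbreviations). Truth values are $\mathbf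 t,\mathbf f,\mathbf u$ with truth order $\mathbf f<_t\mathbf u<_t\mathbf t$; $\mathbf t^{-1}=\mathbf f$, $\mathbf f^{-1}=\mathbf t$, $\mathbf u^{-1}=\mathbf u$. A possible world structure (PWS) is a set of structures; $Q_1\le_K Q_2$ iff $Q_2\subseteq Q_1$; $\bot$ denotes the set of all structures and $\top=\emptyset$. A distributed possible world structure (DPWS) is a family $\mathcal Q=(\mathcal Q_A)_{A\in\mathcal A}$ of PWSs, ordered pointwise by $\le_K$. A distributed belief pair (DBP) is a pair $\mathcal B=(\mathcal B^c,\mathcal B^l)$ of DPWSs; $(\mathcal P,\mathcal S)\le_p(\mathcal P',\mathcal S')$ iff $\mathcal P\le_K\mathcal P'$ and $\mathcal S'\le_K\mathcal S$. A DBP is consistent if $\mathcal B^c\le_K\mathcal B^l$ (i.e. $\mathcal B^l_A\subseteq\mathcal B^c_A$ for all $A$); DBPs are tacitly assumed consistent unless said otherwise, and a DPWS $\mathcal Q$ is identified with the exact DBP $(\mathcal Q,\mathcal Q)$. Two-valued value $\varphi^{\mathcal Q,I,a}$ (DPWS $\mathcal Q$, structure $I$, variable assignment $a$): standard first-order clauses for atoms, $\neg,\wedge,\forall$, and $(K_t\varphi)^{\mathcal Q,I,a}=\mathbf t$ iff $t^{I,a}\in\mathcal A$ and $\varphi^{\mathcal Q,J,a}=\mathbf t$ for every $J\in\mathcal Q_{t^{I,a}}$, otherwise $\mathbf f$. Three-valued value $\varphi^{\mathcal B,I,a}$ for any pair $\mathcal B$ of DPWSs: atoms get their two-valued value in $I$;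 $\neg$ is interpreted by ${}^{-1}$, and $\wedge$, $\forall$ by $\le_t$-greatest lower bound (Kleene); $(K_t\varphi)^{\mathcal B,I,a}$ is $\mathbf t$ if $t^{I,a}\in\mathcal A$ and $\varphi^{\mathcal B,J,a}=\mathbf t$ for all $J\in\mathcal B^c_{t^{I,a}}$; it is $\mathbf f$ if $t^{I,a}\notin\mathcal A$ or $\varphi^{\mathcal B,J,a}=\mathbf f$ for some $J\in\mathcal B^l_{t^{I,a}}$; and $\mathbf u$ otherwise. For sentences the assignment is omitted, and the value of a set of sentences is the $\le_t$-glb of the values of its members. A distributed theory is a family $\mathcal T=(\mathcal T_A)_{A\in\mathcal A}$ of sets of dAEL sentences. Operators: $D_{\mathcal T}(\mathcal Q)=(\{I:\mathcal T_A^{\mathcal Q,I}=\mathbf t\})_{A\in\mathcal A}$; $D^*_{\mathcal T}(\mathcal B)=(D^c_{\mathcal T}(\mathcal B),D^l_{\mathcal T}(\mathcal B))$ with $D^c_{\mathcal T}(\mathcal B)_A=\{I:\mathcal T_A^{\mathcal B,I}\ne\mathbf f\}$ and $D^l_{\mathcal T}(\mathcal B)_A=\{I:\mathcal T_A^{\mathcal B,I}=\mathbf t\}$; the stable operator $S_{\mathcal T}(\mathcal Q)$ is the $\le_K$-least fixpoint of $\mathcal Q'\mapsto D^c_{\mathcal T}((\mathcal Q',\mathcal Q))$. Models of $\mathcal T$ (w.r.t. $I_o$): a Sup-model is a DPWS fixpoint of $D_{\mathcal T}$; the KK-model is the $\le_p$-least fixpoint of $D^*_{\mathcal T}$; a PSt-model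 is a DBP $\mathcal B$ with $\mathcal B^c=S_{\mathcal T}(\mathcal B^l)$ and $\mathcal B^l=S_{\mathcal T}(\mathcal B^c)$; an St-model is a DPWS $\mathcal Q$ such that $(\mathcal Q,\mathcal Q)$ is a PSt-model; the WF-model is the $\le_p$-least PSt-model. Permaconsistency: $\mathcal T$ is permaconsistent if for each $A\in\mathcal A$ and each theory $T'$ obtained from $\mathcal T_A$ by replacing each occurrence of a subformula $K_t\varphi$ that is not nested under a modal operator by $\mathbf t$ or by $\mathbf f$ (independently per occurrence), $T'$ has a model that is a structure (i.e. expands $I_o$). Translation to AEL. $\Sigma'$ consists of all symbols of $\Sigma_o$ and all symbols of $\Sigma_s$ with arity increased by one. A fixed element $\delta\in D$ is chosen. A $\Sigma'$-structure always has domain $D$, agrees with $I_o$ on $\Sigma_o$, and is normal: for every $f\in\Sigma_s$, $f^J(\bar d,d)=\delta$ whenever $d\notin\mathcal A$, and for every relation $R\in\Sigma_s$, $(\bar d,d)\notin R^J$ whenever $d\notin\mathcal A$. AEL formulas over $\Sigma'$ are built like dAEL formulas but with a single unindexed modal operator $K$. AEL semantics: a PWS is a set of $\Sigma'$-structures (with $\le_K$ reverse inclusion, $\bot$ the set of all $\Sigma'$-structures, $\top=\emptyset$); a belief pair is a pair $(P,S)$ of PWSs with $S\subseteq P$, with $(P,S)\le_p(P',S')$ iff $P\le_K P'$ and $S'\le_K S$; values $\varphi^{Q,J}$ and $\varphi^{(P,S),J}$ are defined as in dAEL but with $(K\varphi)^{Q,J,a}=\mathbf t$ iff $\varphi^{Q,J',a}=\mathbf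 t$ for all $J'\in Q$, and $(K\varphi)^{(P,S),J,a}$ equal to $\mathbf t$ if $\varphi$ is $\mathbf t$ at all $J'\in P$, $\mathbf f$ if $\varphi$ is $\mathbf f$ at some $J'\in S$, $\mathbf u$ otherwise. For an AEL theory $T$: $D_T(Q)=\{J:T^{Q,J}=\mathbf t\}$, $D^*_T(P,S)=(\{J:T^{(P,S),J}\ne\mathbf f\},\{J:T^{(P,S),J}=\mathbf t\})$, $S_T(Q)$ = $\le_K$-least fixpoint of $Q'\mapsto D^*_T(Q',Q)_1$; Sup-, KK-, PSt-, St-, WF-models are defined from these exactly as in dAEL. For a $\Sigma$-term $t$ and $\Sigma'$-term $s$, $t_s$ is defined by $x_s=x$ for variables, $f(t_1,\dots,t_n)_s=f((t_1)_s,\dots,(t_n)_s,s)$ for $f\in\Sigma_s$, $f(t_1,\dots,t_n)_s=f((t_1)_s,\dots,(t_n)_s)$ for $f\in\Sigma_o$. $\tau_{\mathit{formula}}(s,\cdot)$: $P(t_1,\dots,t_n)\mapsto P((t_1)_s,\dots,(t_n)_s,s)$ if $P\in\Sigma_s$, $P((t_1)_s,\dots,(t_n)_s)$ if $P\in\Sigma_o$ or equality; commutes with $\neg,\wedge,\forall x$; $\tau_{\mathit{formula}}(s,K_t\phi)=\exists x(x=t_s\wedge\mathrm{Apred}(x)\wedge K\,\tau_{\mathit{formula}}(x,\phi))$ for a fresh variable $x$. $\tau_{\mathit{theory}}(\mathcal T)=\bigcup_{A\in\mathcal A}\{\tau_{\mathit{formula}}(A,\phi):\phi\in\mathcal T_A\}$.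 For a family $(I_A)_{A\in\mathcal A}$ of structures, $\tau_{\mathit{structure}}((I_A)_A)$ is the $\Sigma'$-structure interpreting $\Sigma_o$ as $I_o$, each $f\in\Sigma_s$ by $f(\bar d,d)=f^{I_d}(\bar d)$ if $d\in\mathcal A$ and $\delta$ otherwise, and each relation $R\in\Sigma_s$ by $(\bar d,d)\in R$ iff $d\in\mathcal A$ and $\bar d\in R^{I_d}$. $\tau_{\mathit{pws}}(\mathcal Q)=\{\tau_{\mathit{structure}}((I_A)_A): I_A\in\mathcal Q_A\text{ for all }A\in\mathcal A\}$, and $\tau_{\mathit{beliefpair}}(\mathcal B)=(\tau_{\mathit{pws}}(\mathcal B^c),\tau_{\mathit{pws}}(\mathcal B^l))$. *)

From Stdlib Require Import List Arith Classical ClassicalEpsilon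
  FunctionalExtensionality PropExtensionality ProofIrrelevance.
Import ListNotations.
Set Implicit Arguments.

Record Setup := mkSetup {
  s_F : Type;
  s_R : Type;
  s_arF : s_F -> nat;
  s_arR : s_R -> nat;
  s_subjF : s_F -> bool;             (* true iff the symbol is in Sigma_s *)
  s_subjR : s_R -> bool;
  s_D : Type;
  s_IoF : s_F -> list s_D -> s_D;    (* I_o (only used on objective symbols, at their arity) *)
  s_IoR : s_R -> list s_D -> Prop;
  s_agent : s_D -> Prop;
  s_agentC : s_D -> s_F;
  s_Apred : s_R;
  s_delta : s_D;                     (* the fixed element delta (so D is nonempty) *)
  s_agentC_obj : forall a, s_agent a -> s_subjF (s_agentC a) = false;
  s_agentC_ar : forall a, s_agent a -> s_arF (s_agentC a) = 0;
  s_agentC_int : forall a, s_agent a -> s_IoF (s_agentC a) [] = a;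
  s_Apred_obj : s_subjR s_Apred = false;
  s_Apred_ar : s_arR s_Apred = 1;
  s_Apred_int : forall d, s_IoR s_Apred [d] <-> s_agent d
}.

(* Three truth values with the truth order f < u < t *)
Inductive tv := tT | tF | tU.

Definition tneg (v : tv) : tv :=
  match v with tT => tF | tF => tT | tU => tU end.

Definition tmeet (v w : tv) : tv :=
  match v, w with
  | tF, _ => tF | _, tF => tF | tU, _ => tU | _, tU => tU | tT, tT => tT
  end.

(* <=_t-greatest lower bound of an arbitrary set of values (glb of empty set = t) *)
Definition tglb (P : tv -> Prop) : tv :=
  if excluded_middle_informative (P tF) then tF
  else if excluded_middle_informative (P tU) then tU else tT.

Definition scons {X : Type} (d : X) (a : nat -> X) (n : nat) : X :=
  match n with 0 => d | S k => a k end.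

Section Logic.
Variable Sg : Setup.
Local Notation F := (s_F Sg).
Local Notation R := (s_R Sg).
Local Notation D := (s_D Sg).
Local Notation delta := (s_delta Sg).

Definition Agent := { d : D | s_agent Sg d }.

(* Terms (variables are de Bruijn indices).  The same symbol names are
   used for Sigma and Sigma' (Sigma' only changes arities). *)
Inductive term : Type :=
| Var : nat -> term
| App : F -> list term -> term.

Inductive dform : Type :=
| DAtom : R -> list term -> dform
| DEq : term -> term -> dform
| DNeg : dform -> dform
| DAnd : dform -> dform -> dform
| DAll : dform -> dform
| DK : term -> dform -> dform.

Inductive aform : Type :=
| AAtom : R -> list term -> aform
| AEq : term -> term -> aform
| ANeg : aform -> aform
| AAnd : aform -> aform -> aform
| AAll : aform -> aform
| AK : aform -> aform.

Definition AEx (phi : aform) : aform := ANeg (AAll (ANeg phi)).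

Fixpoint term_ok (k : nat) (t : term) : bool :=
  match t with
  | Var n => Nat.ltb n k
  | App f ts => Nat.eqb (length ts) (s_arF Sg f) && forallb (term_ok k) ts
  end.

Fixpoint dform_ok (k : nat) (phi : dform) : bool :=
  match phi with
  | DAtom r ts => Nat.eqb (length ts) (s_arR Sg r) && forallb (term_ok k) ts
  | DEq t1 t2 => term_ok k t1 && term_ok k t2
  | DNeg p => dform_ok k p
  | DAnd p q => dform_ok k p && dform_ok k q
  | DAll p => dform_ok (S k) p
  | DK t p => term_ok k t && dform_ok k p
  end.

Definition dsentence (phi : dform) : Prop := dform_ok 0 phi = true.

Record raw := mkRaw { rF : F -> list D -> D; rR : R -> list D -> Prop }.

(* Interpretations are given on lists; on lists of the wrong length a
   function symbol yields delta and a relation symbol is false (so a raw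
   structure of this kind is exactly an ordinary structure). *)
Definition is_structure (I : raw) : Prop :=
  (forall f l, length l = s_arF Sg f -> s_subjF Sg f = false -> rF I f l = s_IoF Sg f l) /\
  (forall r l, length l = s_arR Sg r -> s_subjR Sg r = false -> (rR I r l <-> s_IoR Sg r l)) /\
  (forall f l, length l <> s_arF Sg f -> rF I f l = delta) /\
  (forall r l, length l <> s_arR Sg r -> ~ rR I r l).

Definition arF' (f : F) : nat := s_arF Sg f + (if s_subjF Sg f then 1 else 0).
Definition arR' (r : R) : nat := s_arR Sg r + (if s_subjR Sg r then 1 else 0).

Definition is_structure' (J : raw) : Prop :=
  (forall f l, length l = arF' f -> s_subjF Sg f = false -> rF J f l = s_IoF Sg f l) /\
  (forall r l, length l = arR' r -> s_subjR Sg r = false -> (rR J r l <-> s_IoR Sg r l)) /\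
  (forall f l, length l <> arF' f -> rF J f l = delta) /\
  (forall r l, length l <> arR' r -> ~ rR J r l) /\
  (forall f ds d, s_subjF Sg f = true -> ~ s_agent Sg d -> rF J f (ds ++ [d]) = delta) /\
  (forall r ds d, s_subjR Sg r = true -> ~ s_agent Sg d -> ~ rR J r (ds ++ [d])).

Definition structure := { I : raw | is_structure I }.
Definition structure' := { J : raw | is_structure' J }.

Definition PWS := structure -> Prop.
Definition DPWS := Agent -> PWS.
Definition DBP := (DPWS * DPWS)%type.
Definition PWS' := structure' -> Prop.
Definition BP' := (PWS' * PWS')%type.

Definition leK {X : Type} (Q1 Q2 : X -> Prop) : Prop := forall x, Q2 x -> Q1 x.
Definition leKD (Q1 Q2 : DPWS) : Prop := forall A, leK (Q1 A) (Q2 A).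

Fixpoint evalT (I : raw) (a : nat -> D) (t : term) : D :=
  match t with
  | Var n => a n
  | App f ts => rF I f (map (evalT I a) ts)
  end.

Definition of_prop (p : Prop) : tv :=
  if excluded_middle_informative p then tT else tF.

Fixpoint dsat (Q : DPWS) (I : structure) (a : nat -> D) (phi : dform) : Prop :=
  match phi with
  | DAtom r ts => rR (proj1_sig I) r (map (evalT (proj1_sig I) a) ts)
  | DEq t1 t2 => evalT (proj1_sig I) a t1 = evalT (proj1_sig I) a t2
  | DNeg p => ~ dsat Q I a p
  | DAnd p q => dsat Q I a p /\ dsat Q I a q
  | DAll p => forall d : D, dsat Q I (scons d a) p
  | DK t p =>
      exists H : s_agent Sg (evalT (proj1_sig I) a t),
        forall J, Q (exist _ _ H) J -> dsat Q J a p
  end.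

Fixpoint dval (B : DBP) (I : structure) (a : nat -> D) (phi : dform) : tv :=
  match phi with
  | DAtom r ts => of_prop (rR (proj1_sig I) r (map (evalT (proj1_sig I) a) ts))
  | DEq t1 t2 => of_prop (evalT (proj1_sig I) a t1 = evalT (proj1_sig I) a t2)
  | DNeg p => tneg (dval B I a p)
  | DAnd p q => tmeet (dval B I a p) (dval B I a q)
  | DAll p => tglb (fun v => exists d : D, v = dval B I (scons d a) p)
  | DK t p =>
      match excluded_middle_informative (s_agent Sg (evalT (proj1_sig I) a t)) with
      | right _ => tF
      | left H =>
          if excluded_middle_informative
               (forall J, fst B (exist _ _ H) J -> dval B J a p = tT) then tT
          else if excluded_middle_informative
               (exists J, snd B (exist _ _ H) J /\ dval B J a p = tF) then tF
          else tU
      end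
  end.

(* sentences: the assignment is irrelevant; we use the constant one *)
Definition a0 : nat -> D := fun _ => delta.

Definition dtheory := Agent -> dform -> Prop.

Definition dtheory_wf (T : dtheory) : Prop :=
  forall A phi, T A phi -> dsentence phi.

Definition dset_sat (T : dform -> Prop) (Q : DPWS) (I : structure) : Prop :=
  forall phi, T phi -> dsat Q I a0 phi.

Definition dset_val (T : dform -> Prop) (B : DBP) (I : structure) : tv :=
  tglb (fun v => exists phi, T phi /\ v = dval B I a0 phi).

Definition DopD (T : dtheory) (Q : DPWS) : DPWS :=
  fun A I => dset_sat (T A) Q I.
Definition DcD (T : dtheory) (B : DBP) : DPWS :=
  fun A I => dset_val (T A) B I <> tF.
Definition DlD (T : dtheory) (B : DBP) : DPWS :=
  fun A I => dset_val (T A) B I = tT.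
Definition DstarD (T : dtheory) (B : DBP) : DBP := (DcD T B, DlD T B).

Fixpoint asat (Q : PWS') (J : structure') (a : nat -> D) (phi : aform) : Prop :=
  match phi with
  | AAtom r ts => rR (proj1_sig J) r (map (evalT (proj1_sig J) a) ts)
  | AEq t1 t2 => evalT (proj1_sig J) a t1 = evalT (proj1_sig J) a t2
  | ANeg p => ~ asat Q J a p
  | AAnd p q => asat Q J a p /\ asat Q J a q
  | AAll p => forall d : D, asat Q J (scons d a) p
  | AK p => forall J', Q J' -> asat Q J' a p
  end.

Fixpoint aval (B : BP') (J : structure') (a : nat -> D) (phi : aform) : tv :=
  match phi with
  | AAtom r ts => of_prop (rR (proj1_sig J) r (map (evalT (proj1_sig J) a) ts))
  | AEq t1 t2 => of_prop (evalT (proj1_sig J) a t1 = evalT (proj1_sig J) a t2)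
  | ANeg p => tneg (aval B J a p)
  | AAnd p q => tmeet (aval B J a p) (aval B J a q)
  | AAll p => tglb (fun v => exists d : D, v = aval B J (scons d a) p)
  | AK p =>
      if excluded_middle_informative (forall J', fst B J' -> aval B J' a p = tT) then tT
      else if excluded_middle_informative (exists J', snd B J' /\ aval B J' a p = tF) then tF
      else tU
  end.

Definition atheory := aform -> Prop.

Definition aset_sat (T : atheory) (Q : PWS') (J : structure') : Prop :=
  forall phi, T phi -> asat Q J a0 phi.
Definition aset_val (T : atheory) (B : BP') (J : structure') : tv :=
  tglb (fun v => exists phi, T phi /\ v = aval B J a0 phi).

Definition DopA (T : atheory) (Q : PWS') : PWS' := fun J => aset_sat T Q J.
Definition DstarA (T : atheory) (B : BP') : BP' :=
  (fun J => aset_val T B J <> tF, fun J => aset_val T B J = tT).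

(* objective formulas with truth constants: the result of replacing
   top-level modal subformulas by t or f *)
Inductive pform : Type :=
| PAtom : R -> list term -> pform
| PEq : term -> term -> pform
| PNeg : pform -> pform
| PAnd : pform -> pform -> pform
| PAll : pform -> pform
| PConst : bool -> pform.

Fixpoint psat (I : structure) (a : nat -> D) (phi : pform) : Prop :=
  match phi with
  | PAtom r ts => rR (proj1_sig I) r (map (evalT (proj1_sig I) a) ts)
  | PEq t1 t2 => evalT (proj1_sig I) a t1 = evalT (proj1_sig I) a t2
  | PNeg p => ~ psat I a p
  | PAnd p q => psat I a p /\ psat I a q
  | PAll p => forall d : D, psat I (scons d a) p
  | PConst b => b = true
  end.

Inductive repl : dform -> pform -> Prop :=
| repl_atom : forall r ts, repl (DAtom r ts) (PAtom r ts)
| repl_eq : forall t1 t2, repl (DEq t1 t2) (PEq t1 t2)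
| repl_neg : forall p p', repl p p' -> repl (DNeg p) (PNeg p')
| repl_and : forall p p' q q', repl p p' -> repl q q' -> repl (DAnd p q) (PAnd p' q')
| repl_all : forall p p', repl p p' -> repl (DAll p) (PAll p')
| repl_K : forall t p (b : bool), repl (DK t p) (PConst b).

Definition permaconsistent (T : dtheory) : Prop :=
  forall (A : Agent) (choice : dform -> pform),
    (forall phi, T A phi -> repl phi (choice phi)) ->
    exists I : structure, forall phi, T A phi -> psat I a0 (choice phi).

Fixpoint shiftT (c : nat) (t : term) : term :=
  match t with
  | Var n => Var (if Nat.ltb n c then n else S n)
  | App f ts => App f (map (shiftT c) ts)
  end.

Definition upren (rho : nat -> nat) (n : nat) : nat :=
  match n with 0 => 0 | S k => S (rho k) end.

(* t_s, where additionally the variables of t are renamed by rho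
   (rho is used to realise the de Bruijn shifts caused by new binders;
   the actual t_s is tr_term id s t) *)
Fixpoint tr_term (rho : nat -> nat) (s : term) (t : term) : term :=
  match t with
  | Var n => Var (rho n)
  | App f ts => App f (map (tr_term rho s) ts ++ (if s_subjF Sg f then [s] else []))
  end.

(* In the K-clause, the fresh variable x is the de Bruijn variable bound by the
   new existential quantifier; the free variables of t_s and of phi are shifted
   past it. *)
Fixpoint tr_form (rho : nat -> nat) (s : term) (phi : dform) : aform :=
  match phi with
  | DAtom r ts => AAtom r (map (tr_term rho s) ts ++ (if s_subjR Sg r then [s] else []))
  | DEq t1 t2 => AEq (tr_term rho s t1) (tr_term rho s t2)
  | DNeg p => ANeg (tr_form rho s p)
  | DAnd p q => AAnd (tr_form rho s p) (tr_form rho s q)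
  | DAll p => AAll (tr_form (upren rho) (shiftT 0 s) p)
  | DK t p =>
      AEx (AAnd (AEq (Var 0) (shiftT 0 (tr_term rho s t)))
                (AAnd (AAtom (s_Apred Sg) [Var 0])
                      (AK (tr_form (fun n => S (rho n)) (Var 0) p))))
  end.

Definition tau_formula (s : term) (phi : dform) : aform := tr_form (fun n => n) s phi.

Definition agent_term (A : Agent) : term := App (s_agentC Sg (proj1_sig A)) [].

Definition tau_theory (T : dtheory) : atheory :=
  fun psi => exists (A : Agent) phi, T A phi /\ psi = tau_formula (agent_term A) phi.

Definition tau_raw (fam : Agent -> structure) : raw :=
  mkRaw
    (fun f l =>
       if s_subjF Sg f then
         if Nat.eqb (length l) (s_arF Sg f + 1) then
           match excluded_middle_informative (s_agent Sg (last l delta)) with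
           | left H => rF (proj1_sig (fam (exist _ _ H))) f (removelast l)
           | right _ => delta
           end
         else delta
       else if Nat.eqb (length l) (s_arF Sg f) then s_IoF Sg f l else delta)
    (fun r l =>
       if s_subjR Sg r then
         length l = s_arR Sg r + 1 /\
         exists H : s_agent Sg (last l delta),
           rR (proj1_sig (fam (exist _ _ H))) r (removelast l)
       else length l = s_arR Sg r /\ s_IoR Sg r l).

Definition tau_pws (Q : DPWS) : PWS' :=
  fun J => exists fam : Agent -> structure,
      (forall A, Q A (fam A)) /\ proj1_sig J = tau_raw fam.

Definition tau_bp (B : DBP) : BP' := (tau_pws (fst B), tau_pws (snd B)).

End Logic.

Section Models.
Variable L : Type.
Variable le : L -> L -> Prop.

Definition lep (B1 B2 : L * L) : Prop := le (fst B1) (fst B2) /\ le (snd B2) (snd B1).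
Definition consistentP (B : L * L) : Prop := le (fst B) (snd B).

Definition is_stable (Dc : L * L -> L) (Q x : L) : Prop :=
  Dc (x, Q) = x /\ forall y, Dc (y, Q) = y -> le x y.

Definition is_sup_model (Dop : L -> L) (Q : L) : Prop := Dop Q = Q.

Definition is_kk_model (Dstar : L * L -> L * L) (B : L * L) : Prop :=
  consistentP B /\ Dstar B = B /\
  forall B', consistentP B' -> Dstar B' = B' -> lep B B'.

Definition is_pst_model (Dc : L * L -> L) (B : L * L) : Prop :=
  consistentP B /\ is_stable Dc (snd B) (fst B) /\ is_stable Dc (fst B) (snd B).

Definition is_st_model (Dc : L * L -> L) (Q : L) : Prop := is_pst_model Dc (Q, Q).

Definition is_wf_model (Dc : L * L -> L) (B : L * L) : Prop :=
  is_pst_model Dc B /\ forall B', is_pst_model Dc B' -> lep B B'.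
End Models.

Definition dSup (Sg : Setup) (T : dtheory Sg) (Q : DPWS Sg) :=
  is_sup_model (DopD T) Q.
Definition dKK (Sg : Setup) (T : dtheory Sg) (B : DBP Sg) :=
  is_kk_model (@leKD Sg) (DstarD T) B.
Definition dPSt (Sg : Setup) (T : dtheory Sg) (B : DBP Sg) :=
  is_pst_model (@leKD Sg) (DcD T) B.
Definition dSt (Sg : Setup) (T : dtheory Sg) (Q : DPWS Sg) :=
  is_st_model (@leKD Sg) (DcD T) Q.
Definition dWF (Sg : Setup) (T : dtheory Sg) (B : DBP Sg) :=
  is_wf_model (@leKD Sg) (DcD T) B.

Definition aSup (Sg : Setup) (T : atheory Sg) (Q : PWS' Sg) :=
  is_sup_model (DopA T) Q.
Definition aKK (Sg : Setup) (T : atheory Sg) (B : BP' Sg) :=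
  is_kk_model (@leK _) (DstarA T) B.
Definition aPSt (Sg : Setup) (T : atheory Sg) (B : BP' Sg) :=
  is_pst_model (@leK _) (fun B => fst (DstarA T B)) B.
Definition aSt (Sg : Setup) (T : atheory Sg) (Q : PWS' Sg) :=
  is_st_model (@leK _) (fun B => fst (DstarA T B)) Q.
Definition aWF (Sg : Setup) (T : atheory Sg) (B : BP' Sg) :=
  is_wf_model (@leK _) (fun B => fst (DstarA T B)) B.

Definition dconsistent (Sg : Setup) (B : DBP Sg) : Prop := consistentP (@leKD Sg) B.

From Stdlib Require Import List Arith Lia Classical ClassicalEpsilon
  FunctionalExtensionality PropExtensionality ProofIrrelevance.
Import ListNotations.
Set Implicit Arguments.

(* The argument separates an order-theoretic core from the logic.  Section
   [Transfer] shows abstractly: if emb : L -> L' has a left inverse proj on the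
   "good" elements, is monotone and reflects the order into good elements, and
   the approximating operator on L' is emb . D* . proj where D* only produces
   good elements, then models of every kind (fixpoints, stable fixpoints,
   least ones) on the two sides correspond under emb.

   The rest instantiates this with emb = tau_pws, proj = pi (the projection of
   a PWS of Sigma'-structures onto its agent slices) and good = "every agent
   has a possible world".  The logical heart is the translation lemma
   [aval_tr_form]: tau_formula(s, phi) has in J the value of phi in the slice
   of J at the agent denoted by s.  It shows that the AEL operator of
   tau_theory(T) is tau_pws of the dAEL operator at the projection
   ([DstarA_tau]), while permaconsistency makes every operator value nonempty
   ([NE_Dc], [NE_Dl]). *)

Section Transfer.
Context {L L' : Type} {leL : L -> L -> Prop} {leL' : L' -> L' -> Prop}.
Context {good : L -> Prop} {emb : L -> L'} {proj : L' -> L}.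
Context {Dc Dl : L * L -> L} {Dstar' : L' * L' -> L' * L'}.

Hypothesis leL_refl : forall x, leL x x.
Hypothesis good_antitone : forall x y, leL x y -> good y -> good x.
Hypothesis proj_emb : forall x, good x -> proj (emb x) = x.
Hypothesis emb_mono : forall x y, leL x y -> leL' (emb x) (emb y).
Hypothesis emb_reflect : forall x y, good y -> leL' (emb x) (emb y) -> leL x y.
Hypothesis good_Dc : forall B, good (Dc B).
Hypothesis good_Dl : forall B, good (Dl B).
Hypothesis Dstar'_eq : forall P S,
  Dstar' (P, S) = (emb (Dc (proj P, proj S)), emb (Dl (proj P, proj S))).

Let Dc' (B : L' * L') : L' := fst (Dstar' B).
Let Dstar (B : L * L) : L * L := (Dc B, Dl B).
Let emb2 (B : L * L) : L' * L' := (emb (fst B), emb (snd B)).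

Lemma Dc'_eq P S : Dc' (P, S) = emb (Dc (proj P, proj S)).
Proof. unfold Dc'; rewrite Dstar'_eq; reflexivity. Qed.

Lemma emb_inj x y : good x -> good y -> emb x = emb y -> x = y.
Proof. intros Hx Hy E. rewrite <- (proj_emb Hx), <- (proj_emb Hy), E; reflexivity. Qed.

Lemma good_of_emb x y : emb x = emb y -> good y -> good x.
Proof.
  intros E Hy. apply (good_antitone (y := y)); auto.
  apply emb_reflect; auto. rewrite E. apply emb_mono, leL_refl.
Qed.

Lemma stable_transfer Q x : good Q ->
  is_stable leL Dc Q x <-> is_stable leL' Dc' (emb Q) (emb x).
Proof.
  intros HQ. unfold is_stable. split.
  - intros [Hfix Hleast].
    assert (Hx : good x) by (rewrite <- Hfix; apply good_Dc).
    split.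
    + rewrite Dc'_eq, !proj_emb, Hfix; auto.
    + intros y Hy. rewrite Dc'_eq, proj_emb in Hy by auto.
      (* a fixpoint y on L' is the image of the fixpoint proj y on L *)
      assert (Hproj : proj y = Dc (proj y, Q))
        by (rewrite <- Hy at 1; apply proj_emb, good_Dc).
      rewrite <- Hy. apply emb_mono, Hleast. rewrite <- Hproj. exact (eq_sym Hproj).
  - intros [Hfix Hleast]. rewrite Dc'_eq, (proj_emb HQ) in Hfix.
    assert (Hx : good x) by exact (good_of_emb (eq_sym Hfix) (good_Dc _)).
    rewrite (proj_emb Hx) in Hfix. split.
    + apply emb_inj; auto.
    + intros y Hy. assert (Hgy : good y) by (rewrite <- Hy; apply good_Dc).
      apply emb_reflect; auto. apply Hleast.
      rewrite Dc'_eq, !proj_emb, Hy; auto.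
Qed.

Lemma lep_transfer B B' : good (snd B) -> good (fst B') ->
  lep leL B B' <-> lep leL' (emb2 B) (emb2 B').
Proof. intros HB2 HB1'. unfold lep; simpl. split; intros [H1 H2]; split; auto. Qed.

Lemma consistent_transfer B : good (snd B) ->
  consistentP leL B <-> consistentP leL' (emb2 B).
Proof. intros HB2; unfold consistentP; simpl; split; auto. Qed.

Lemma pst_good B : is_pst_model leL Dc B -> good (fst B) /\ good (snd B).
Proof.
  intros [_ [[H1 _] [H2 _]]]. split; [rewrite <- H1 | rewrite <- H2]; apply good_Dc.
Qed.

Lemma pst_transfer B : is_pst_model leL Dc B <-> is_pst_model leL' Dc' (emb2 B).
Proof.
  split.
  - intros Hp. destruct (pst_good Hp) as [G1 G2]. destruct Hp as [Hc [H1 H2]].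
    split; [apply consistent_transfer; auto|].
    split; apply stable_transfer; auto.
  - intros [Hc [H1 H2]].
    (* the components are good, being images of values of Dc *)
    assert (G1 : good (fst B)).
    { destruct H1 as [F1 _]. simpl in F1. rewrite Dc'_eq in F1.
      exact (good_of_emb (eq_sym F1) (good_Dc _)). }
    assert (G2 : good (snd B)).
    { destruct H2 as [F2 _]. simpl in F2. rewrite Dc'_eq in F2.
      exact (good_of_emb (eq_sym F2) (good_Dc _)). }
    split; [apply consistent_transfer; auto|].
    split; apply stable_transfer; auto.
Qed.

Lemma pst'_image P : is_pst_model leL' Dc' P -> exists B, P = emb2 B.
Proof.
  destruct P as [P1 P2]. intros [_ [[F1 _] [F2 _]]]. simpl in F1, F2.
  rewrite Dc'_eq in F1, F2.
  exists (Dc (proj P1, proj P2), Dc (proj P2, proj P1)). unfold emb2; simpl.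
  rewrite F1, F2. reflexivity.
Qed.

Lemma wf_transfer B : is_wf_model leL Dc B <-> is_wf_model leL' Dc' (emb2 B).
Proof.
  unfold is_wf_model. split.
  - intros [Hp Hmin]. split; [apply pst_transfer; auto|].
    intros P Hp'. destruct (pst'_image Hp') as [B' ->].
    apply pst_transfer in Hp'.
    apply lep_transfer; [apply (pst_good Hp) | apply (pst_good Hp') | auto].
  - intros [Hp' Hmin']. assert (Hp : is_pst_model leL Dc B) by (apply pst_transfer; auto).
    split; auto. intros B' HB'.
    apply lep_transfer; [apply (pst_good Hp) | apply (pst_good HB') |].
    apply Hmin', pst_transfer; auto.
Qed.

Lemma st_transfer Q : is_st_model leL Dc Q <-> is_st_model leL' Dc' (emb Q).
Proof. exact (pst_transfer (Q, Q)). Qed.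

Lemma sup_transfer Q :
  is_sup_model (fun Q => Dl (Q, Q)) Q <->
  is_sup_model (fun P => snd (Dstar' (P, P))) (emb Q).
Proof.
  unfold is_sup_model. rewrite Dstar'_eq; simpl. split.
  - intros H. assert (G : good Q) by (rewrite <- H; apply good_Dl).
    rewrite proj_emb, H; auto.
  - intros H. pose proof (good_of_emb (eq_sym H) (good_Dl _)) as G.
    rewrite proj_emb in H by auto. apply emb_inj; auto.
Qed.

Lemma Dstar_fix_good B : Dstar B = B -> good (fst B) /\ good (snd B).
Proof.
  destruct B as [B1 B2]. intros H. injection H as E1 E2.
  split; simpl; [rewrite <- E1; apply good_Dc | rewrite <- E2; apply good_Dl].
Qed.

Lemma Dstar'_fix_good B : Dstar' (emb2 B) = emb2 B -> good (fst B) /\ good (snd B).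
Proof.
  unfold emb2. rewrite Dstar'_eq. intros H. injection H as E1 E2.
  exact (conj (good_of_emb (eq_sym E1) (good_Dc _)) (good_of_emb (eq_sym E2) (good_Dl _))).
Qed.

Lemma Dstar'_image P : Dstar' P = P -> exists B, P = emb2 B.
Proof.
  destruct P as [P1 P2]. rewrite Dstar'_eq. intros H. injection H as E1 E2.
  exists (Dc (proj P1, proj P2), Dl (proj P1, proj P2)). unfold emb2; simpl.
  rewrite E1, E2. reflexivity.
Qed.

Lemma Dstar_fix_transfer B : good (fst B) -> good (snd B) ->
  Dstar B = B <-> Dstar' (emb2 B) = emb2 B.
Proof.
  destruct B as [B1 B2]. unfold Dstar, emb2; simpl. intros G1 G2.
  rewrite Dstar'_eq, !proj_emb by auto. split.
  - intros H. injection H as E1 E2. rewrite E1, E2. reflexivity.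
  - intros H. injection H as E1 E2. f_equal; apply emb_inj; auto.
Qed.

Lemma kk_transfer B : is_kk_model leL Dstar B <-> is_kk_model leL' Dstar' (emb2 B).
Proof.
  unfold is_kk_model. split.
  - intros [Hc [Hf Hmin]]. destruct (Dstar_fix_good Hf) as [G1 G2].
    split; [apply consistent_transfer; auto|].
    split; [apply Dstar_fix_transfer; auto|].
    intros P HcP HfP. destruct (Dstar'_image HfP) as [B' ->].
    destruct (Dstar'_fix_good HfP) as [G1' G2'].
    apply lep_transfer; auto. apply Hmin.
    + apply consistent_transfer; auto.
    + apply Dstar_fix_transfer; auto.
  - intros [Hc' [Hf' Hmin']]. destruct (Dstar'_fix_good Hf') as [G1 G2].
    split; [apply consistent_transfer; auto|].
    split; [apply Dstar_fix_transfer; auto|].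
    intros B' HcB' HfB'. destruct (Dstar_fix_good HfB') as [G1' G2'].
    apply lep_transfer; auto. apply Hmin'.
    + apply consistent_transfer; auto.
    + apply Dstar_fix_transfer; auto.
Qed.
End Transfer.

Lemma tglb_T (P : tv -> Prop) : tglb P = tT <-> (forall v, P v -> v = tT).
Proof.
  unfold tglb; destruct (excluded_middle_informative (P tF)) as [h|h];
  [|destruct (excluded_middle_informative (P tU)) as [h2|h2]]; split; intros H.
  - discriminate. - apply H in h; discriminate.
  - discriminate. - apply H in h2; discriminate.
  - intros v Hv; destruct v; tauto. - reflexivity.
Qed.

Lemma tglb_F (P : tv -> Prop) : tglb P = tF <-> P tF.
Proof.
  unfold tglb; destruct (excluded_middle_informative (P tF)) as [h|h];
  [|destruct (excluded_middle_informative (P tU)) as [h2|h2]]; split; intros H;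
  try discriminate; tauto.
Qed.

Lemma tglb_ext (P Q : tv -> Prop) : (forall v, P v <-> Q v) -> tglb P = tglb Q.
Proof.
  intros H; assert (P = Q) by (extensionality v; apply propositional_extensionality; auto).
  subst; reflexivity.
Qed.

Lemma tglb_one (P : tv -> Prop) w : P w -> (forall v, P v -> v = w \/ v = tT) -> tglb P = w.
Proof.
  intros Hw Hv. destruct w.
  - apply tglb_T. intros v H; destruct (Hv v H); auto.
  - apply tglb_F; auto.
  - unfold tglb. destruct (excluded_middle_informative (P tF)) as [h|h].
    + destruct (Hv _ h); discriminate.
    + destruct (excluded_middle_informative (P tU)); tauto.
Qed.

Lemma of_prop_T (p : Prop) : of_prop p = tT <-> p.
Proof.
  unfold of_prop; destruct (excluded_middle_informative p); split; intros; try discriminate; tauto.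
Qed.

Lemma of_prop_F (p : Prop) : of_prop p = tF <-> ~ p.
Proof.
  unfold of_prop; destruct (excluded_middle_informative p); split; intros; try discriminate; tauto.
Qed.

Lemma of_prop_iff (p q : Prop) : (p <-> q) -> of_prop p = of_prop q.
Proof. intros H; apply propositional_extensionality in H; subst; auto. Qed.

Lemma tneg_of p : tneg (of_prop p) = of_prop (~ p).
Proof.
  unfold of_prop; destruct (excluded_middle_informative p), (excluded_middle_informative (~p));
    tauto.
Qed.

Lemma tmeet_of p q : tmeet (of_prop p) (of_prop q) = of_prop (p /\ q).
Proof.
  unfold of_prop; destruct (excluded_middle_informative p), (excluded_middle_informative q),
  (excluded_middle_informative (p /\ q)); tauto.
Qed.

Lemma tglb_of {X : Type} (F : X -> Prop) :
  tglb (fun v => exists x, v = of_prop (F x)) = of_prop (forall x, F x).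
Proof.
  destruct (classic (forall x, F x)) as [H|H].
  - rewrite (proj2 (of_prop_T _) H). apply tglb_T. intros v [x ->]. apply of_prop_T; auto.
  - rewrite (proj2 (of_prop_F _) H). apply tglb_F. apply not_all_ex_not in H.
    destruct H as [x Hx]. exists x. symmetry; apply of_prop_F; auto.
Qed.

Lemma emi_if_iff {X : Type} (A B : Prop) (x y : X) : (A <-> B) ->
  (if excluded_middle_informative A then x else y) =
  (if excluded_middle_informative B then x else y).
Proof.
  intros H; destruct (excluded_middle_informative A), (excluded_middle_informative B); tauto.
Qed.

Lemma modal_exact {X : Type} {Q : X -> Prop} {F : X -> tv} {p : X -> Prop}
  (HF : forall x, F x = of_prop (p x)) :
  (if excluded_middle_informative (forall x, Q x -> F x = tT) then tT
   else if excluded_middle_informative (exists x, Q x /\ F x = tF) then tF else tU) =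
  of_prop (forall x, Q x -> p x).
Proof.
  replace F with (fun x => of_prop (p x)) by (extensionality x; auto).
  destruct (classic (forall x, Q x -> p x)) as [C|C].
  - rewrite (proj2 (of_prop_T _) C).
    destruct (excluded_middle_informative _) as [_|h]; auto.
    exfalso; apply h; intros x Hx; apply of_prop_T; auto.
  - rewrite (proj2 (of_prop_F _) C).
    destruct (excluded_middle_informative _) as [h|_].
    { exfalso; apply C; intros x Hx; apply of_prop_T; auto. }
    destruct (excluded_middle_informative _) as [_|h2]; auto.
    exfalso; apply h2. apply not_all_ex_not in C; destruct C as [x C].
    apply imply_to_and in C. exists x; split; [tauto|]. apply of_prop_F; tauto.
Qed.

Section TermInduction.
Variable Sg : Setup.
Variable P : term Sg -> Prop.
Hypothesis P_var : forall n, P (Var Sg n).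
Hypothesis P_app : forall f ts, Forall P ts -> P (App f ts).

Fixpoint term_nested_ind (t : term Sg) : P t :=
  match t with
  | @Var _ n => P_var n
  | App f ts =>
      P_app f ((fix go (l : list (term Sg)) : Forall P l :=
                  match l with
                  | [] => Forall_nil _
                  | x :: l' => Forall_cons _ (term_nested_ind x) (go l')
                  end) ts)
  end.
End TermInduction.

Lemma sig_eq {X : Type} {P : X -> Prop} (x y : {z | P z}) :
  proj1_sig x = proj1_sig y -> x = y.
Proof. destruct x, y; simpl; intros; subst; f_equal; apply proof_irrelevance. Qed.

Lemma map_if_singleton {X Y : Type} (g : X -> Y) (b : bool) x :
  map g (if b then [x] else []) = if b then [g x] else [].
Proof. destruct b; reflexivity. Qed.

Lemma split_last {X : Type} (d : X) {l : list X} {n : nat} (e : length l = n + 1) :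
  l = removelast l ++ [last l d] /\ length (removelast l) = n.
Proof.
  assert (ne : l <> []) by (intro; subst; simpl in e; lia).
  pose proof (app_removelast_last d ne) as El. split; auto.
  rewrite El, length_app in e; simpl in e; lia.
Qed.

Section Slices.
Variable Sg : Setup.
Local Notation delta := (s_delta Sg).

Lemma raw_ext (I I' : raw Sg) :
  (forall f l, rF I f l = rF I' f l) -> (forall r l, rR I r l <-> rR I' r l) -> I = I'.
Proof.
  destruct I as [IF IR], I' as [IF' IR']; simpl; intros HF HR. f_equal.
  - extensionality f; extensionality l; auto.
  - extensionality r; extensionality l; apply propositional_extensionality; auto.
Qed.

Lemma agent_last (A : Agent Sg) l : s_agent Sg (last (l ++ [proj1_sig A]) delta).
Proof. rewrite last_last; apply (proj2_sig A). Qed.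

Lemma last_agent (A : Agent Sg) l (h : s_agent Sg (last (l ++ [proj1_sig A]) delta)) :
  exist _ _ h = A.
Proof. apply sig_eq; simpl; apply last_last. Qed.

(* The slice of a Sigma'-structure J at agent A: subjective symbols are read
   with A as their extra last argument.  It inverts tau_structure. *)
Definition slice_raw (J : raw Sg) (A : Agent Sg) : raw Sg :=
  @mkRaw Sg
    (fun f l => if s_subjF Sg f then
                  (if Nat.eqb (length l) (s_arF Sg f) then rF J f (l ++ [proj1_sig A])
                   else delta)
                else rF J f l)
    (fun r l => if s_subjR Sg r then length l = s_arR Sg r /\ rR J r (l ++ [proj1_sig A])
                else rR J r l).

Lemma slice_ok (J : structure' Sg) A : is_structure (slice_raw (proj1_sig J) A).
Proof.
  destruct J as [J HJ]; simpl; destruct HJ as [H1 [H2 [H3 [H4 _]]]]; unfold arF', arR' in *.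
  unfold is_structure, slice_raw; simpl. split; [|split; [|split]].
  - intros f l Hl Hs; rewrite Hs; apply H1; auto; rewrite Hs; lia.
  - intros r l Hl Hs; rewrite Hs; apply H2; auto; rewrite Hs; lia.
  - intros f l Hl. destruct (s_subjF Sg f) eqn:E.
    + destruct (Nat.eqb_spec (length l) (s_arF Sg f)); tauto.
    + apply H3; rewrite E; lia.
  - intros r l Hl. destruct (s_subjR Sg r) eqn:E; [tauto|].
    apply H4; rewrite E; lia.
Qed.

Definition slice (J : structure' Sg) (A : Agent Sg) : structure Sg :=
  exist _ (slice_raw (proj1_sig J) A) (slice_ok J A).

Lemma slice_rF (J : structure' Sg) A f l :
  rF (proj1_sig (slice J A)) f l =
  rF (proj1_sig J) f (l ++ if s_subjF Sg f then [proj1_sig A] else []).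
Proof.
  destruct J as [J HJ]; simpl; destruct HJ as [_ [_ [H3 _]]]; unfold arF' in H3.
  destruct (s_subjF Sg f) eqn:E; [|rewrite app_nil_r; auto].
  destruct (Nat.eqb_spec (length l) (s_arF Sg f)); auto.
  symmetry; apply H3. rewrite E, length_app; simpl; lia.
Qed.

Lemma slice_rR (J : structure' Sg) A r l :
  rR (proj1_sig (slice J A)) r l <->
  rR (proj1_sig J) r (l ++ if s_subjR Sg r then [proj1_sig A] else []).
Proof.
  destruct J as [J HJ]; simpl; destruct HJ as [_ [_ [_ [H4 _]]]]; unfold arR' in H4.
  destruct (s_subjR Sg r) eqn:E; [|rewrite app_nil_r; tauto].
  split; [tauto|]. intros Hr; split; auto.
  destruct (Nat.eq_dec (length l) (s_arR Sg r)); auto.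
  exfalso; eapply H4; [|exact Hr]. rewrite E, length_app; simpl; lia.
Qed.

Lemma tau_ok (fam : Agent Sg -> structure Sg) : is_structure' (tau_raw fam).
Proof.
  unfold is_structure', arF', arR'; simpl. repeat split.
  - intros f l Hl Hs; rewrite Hs, Nat.add_0_r in *; rewrite Hl, Nat.eqb_refl; auto.
  - intros Hr; rewrite H0, Nat.add_0_r in *; tauto.
  - intros Hr; rewrite H0, Nat.add_0_r in *; tauto.
  - intros f l Hl. destruct (s_subjF Sg f).
    + destruct (Nat.eqb_spec (length l) (s_arF Sg f + 1)); [lia|auto].
    + destruct (Nat.eqb_spec (length l) (s_arF Sg f)); [lia|auto].
  - intros r l Hl Hr. destruct (s_subjR Sg r); destruct Hr; lia.
  - intros f ds d Hs Ha. rewrite Hs. destruct (Nat.eqb _ _); auto.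
    destruct (excluded_middle_informative _) as [h|h]; auto.
    exfalso; rewrite last_last in h; contradiction.
  - intros r ds d Hs Ha Hr. rewrite Hs in Hr. destruct Hr as [_ [h _]].
    rewrite last_last in h; contradiction.
Qed.

Definition tau_s (fam : Agent Sg -> structure Sg) : structure' Sg := exist _ _ (tau_ok fam).

Lemma slice_tau fam A : slice (tau_s fam) A = fam A.
Proof.
  apply sig_eq; simpl. destruct (fam A) as [I [H1 [H2 [H3 H4]]]] eqn:EA; simpl.
  assert (Hlen : forall r l, rR I r l -> length l = s_arR Sg r).
  { intros r l Hr; destruct (Nat.eq_dec (length l) (s_arR Sg r)); auto.
    exfalso; eapply H4; eauto. }
  apply raw_ext; unfold slice_raw, tau_raw; simpl.
  - intros f l. destruct (s_subjF Sg f) eqn:E;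
      destruct (Nat.eqb_spec (length l) (s_arF Sg f)) as [e|e];
      try (symmetry; apply H3; assumption).
    + rewrite length_app, e, Nat.eqb_refl; simpl.
      destruct (excluded_middle_informative _) as [h|h].
      * rewrite (last_agent A l h), EA, removelast_last; auto.
      * exfalso; apply h, agent_last.
    + symmetry; apply H1; auto.
  - intros r l. destruct (s_subjR Sg r) eqn:E.
    + rewrite length_app; simpl. split.
      * intros [e [_ [h Hr]]]. rewrite (last_agent A l h), EA, removelast_last in Hr; auto.
      * intros Hr. split; [apply Hlen; auto|]. split; [rewrite (Hlen _ _ Hr); lia|].
        exists (agent_last A l). rewrite last_agent, EA, removelast_last; auto.
    + split; [intros [e h]; apply H2; auto|].
      intros Hr. split; [apply Hlen|apply H2]; auto.
Qed.

Lemma tau_slice (J : structure' Sg) : proj1_sig J = tau_raw (slice J).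
Proof.
  destruct J as [J [H1 [H2 [H3 [H4 [H5 H6]]]]]]; unfold arF', arR' in *; simpl.
  assert (Hlen : forall r l,
             rR J r l -> length l = s_arR Sg r + (if s_subjR Sg r then 1 else 0)).
  { intros r l Hr.
    destruct (Nat.eq_dec (length l) (s_arR Sg r + (if s_subjR Sg r then 1 else 0))); auto.
    exfalso; eapply H4; eauto. }
  apply raw_ext; unfold tau_raw, slice_raw; simpl.
  - intros f l. destruct (s_subjF Sg f) eqn:E.
    + destruct (Nat.eqb_spec (length l) (s_arF Sg f + 1)) as [e|e];
        [|apply H3; rewrite E; auto].
      destruct (split_last delta e) as [El er].
      destruct (excluded_middle_informative _) as [h|h]; simpl.
      * rewrite er, Nat.eqb_refl, <- El; auto.
      * rewrite El; apply H5; auto.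
    + destruct (Nat.eqb_spec (length l) (s_arF Sg f)) as [e|e].
      * apply H1; auto; rewrite E; lia.
      * apply H3; rewrite E; lia.
  - intros r l. destruct (s_subjR Sg r) eqn:E.
    + split.
      * intros Hr. pose proof (Hlen _ _ Hr) as e. rewrite E in e.
        destruct (split_last delta e) as [El er]. split; auto.
        assert (h : s_agent Sg (last l delta)).
        { apply NNPP; intros h. eapply H6; eauto. rewrite <- El; eauto. }
        exists h; simpl. rewrite <- El; auto.
      * intros [e [h [_ Hr]]]. rewrite (proj1 (split_last delta e)); auto.
    + pose proof (Hlen r l) as e. rewrite E, Nat.add_0_r in e.
      split; [intros Hr; split; auto; apply H2; auto|].
      intros [Hl Hr]; apply H2; auto; rewrite E; lia.
Qed.

Lemma tau_char (Q : DPWS Sg) J : tau_pws Q J <-> forall A, Q A (slice J A).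
Proof.
  split.
  - intros [fam [HQ E]] A. replace (slice J A) with (slice (tau_s fam) A).
    + rewrite slice_tau; auto.
    + apply sig_eq; simpl; rewrite E; auto.
  - intros H. exists (slice J); split; auto. apply tau_slice.
Qed.
End Slices.

Section Translation.
Variable Sg : Setup.

Definition pi (P : PWS' Sg) : DPWS Sg := fun A I => exists J, P J /\ slice J A = I.

Lemma shift_eval (I : raw Sg) a e t : evalT I (scons e a) (shiftT 0 t) = evalT I a t.
Proof.
  induction t using term_nested_ind; simpl; auto.
  f_equal. rewrite map_map. apply map_ext_Forall. eapply Forall_impl; [|exact H]. simpl; auto.
Qed.

Lemma aval_one_point (B : BP' Sg) J a t psi :
  aval B J a (AEx (AAnd (AEq (Var Sg 0) (shiftT 0 t)) psi)) =
  aval B J (scons (evalT (proj1_sig J) a t) a) psi.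
Proof.
  set (te := evalT (proj1_sig J) a t). set (w := aval B J (scons te a) psi).
  assert (Hv : forall e, aval B J (scons e a) (AAnd (AEq (Var Sg 0) (shiftT 0 t)) psi) =
                       if excluded_middle_informative (e = te) then w else tF).
  { intros e. cbn [aval evalT scons]. rewrite shift_eval. fold te.
    destruct (excluded_middle_informative (e = te)) as [->|Ne].
    - rewrite (proj2 (of_prop_T _) eq_refl). unfold w; destruct (aval _ _ _ _); reflexivity.
    - rewrite (proj2 (of_prop_F _) Ne). reflexivity. }
  change (tneg (tglb (fun v => exists e, v = tneg (aval B J (scons e a)
                      (AAnd (AEq (Var Sg 0) (shiftT 0 t)) psi)))) = w).
  transitivity (tneg (tneg w)); [|destruct w; reflexivity].
  f_equal. apply tglb_one.
  - exists te. rewrite Hv. destruct (excluded_middle_informative (te = te)); tauto.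
  - intros v [e ->]. rewrite Hv. destruct (excluded_middle_informative (e = te)); auto.
Qed.

Lemma tr_term_eval (J : structure' Sg) a rho s (d : Agent Sg) t :
  evalT (proj1_sig J) a s = proj1_sig d ->
  evalT (proj1_sig J) a (tr_term rho s t) = evalT (proj1_sig (slice J d)) (fun n => a (rho n)) t.
Proof.
  intros Hs. induction t using term_nested_ind; cbn [evalT tr_term]; auto.
  rewrite slice_rF, map_app, map_map, map_if_singleton, Hs. do 2 f_equal.
  apply map_ext_Forall. eapply Forall_impl; [|exact H]. simpl; auto.
Qed.

Lemma Apred_iff (J : structure' Sg) e : rR (proj1_sig J) (s_Apred Sg) [e] <-> s_agent Sg e.
Proof.
  destruct (proj2_sig J) as [_ [H2 _]]. rewrite H2; [apply s_Apred_int| |apply s_Apred_obj].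
  unfold arR'; rewrite s_Apred_obj, s_Apred_ar; reflexivity.
Qed.

Lemma modal_pi (P0 S0 : PWS' Sg) (d : Agent Sg) (F : structure' Sg -> tv)
  (G : structure Sg -> tv) (HFG : forall J, F J = G (slice J d)) :
  (if excluded_middle_informative (forall J, P0 J -> F J = tT) then tT
   else if excluded_middle_informative (exists J, S0 J /\ F J = tF) then tF else tU) =
  (if excluded_middle_informative (forall I, pi P0 d I -> G I = tT) then tT
   else if excluded_middle_informative (exists I, pi S0 d I /\ G I = tF) then tF else tU).
Proof.
  assert (Know : (forall J, P0 J -> F J = tT) <-> (forall I, pi P0 d I -> G I = tT)).
  { split.
    - intros H I [J [HJ <-]]. rewrite <- HFG; auto.
    - intros H J HJ. rewrite HFG. apply H. exists J; auto. }
  assert (Refute : (exists J, S0 J /\ F J = tF) <-> (exists I, pi S0 d I /\ G I = tF)).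
  { split.
    - intros [J [HJ Hv]]. exists (slice J d). split; [exists J; auto|]. rewrite <- HFG; auto.
    - intros [I [[J [HJ <-]] Hv]]. exists J. rewrite HFG; auto. }
  rewrite (emi_if_iff tF tU Refute), (emi_if_iff tT _ Know). reflexivity.
Qed.

Lemma aval_tr_form (P0 S0 : PWS' Sg) phi :
  forall rho s (J : structure' Sg) a (d : Agent Sg),
  evalT (proj1_sig J) a s = proj1_sig d ->
  aval (P0, S0) J a (tr_form rho s phi) =
  dval (pi P0, pi S0) (slice J d) (fun n => a (rho n)) phi.
Proof.
  induction phi as [r ts|t1 t2|phi IHphi|phi1 IHphi1 phi2 IHphi2|phi IHphi|t phi IHphi];
    intros rho s J a d Hs; cbn [tr_form].
  - cbn [aval dval]. apply of_prop_iff.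
    rewrite slice_rR, map_app, map_map, map_if_singleton, Hs.
    rewrite (map_ext _ _ (fun x => tr_term_eval J a rho s d x Hs)). reflexivity.
  - cbn [aval dval]. apply of_prop_iff. rewrite !(tr_term_eval J a rho s d _ Hs). reflexivity.
  - cbn [aval dval]. rewrite (IHphi rho s J a d Hs); auto.
  - cbn [aval dval]. rewrite (IHphi1 rho s J a d Hs), (IHphi2 rho s J a d Hs); auto.
  - cbn [aval dval]. apply tglb_ext. intros v; split; intros [e ->]; exists e;
      rewrite (IHphi (upren rho) (shiftT 0 s) J (scons e a) d) by (rewrite shift_eval; auto);
      f_equal; extensionality n; destruct n; reflexivity.
  - (* K_t phi: the existential picks x := value of t, Apred(x) says it is an
       agent, and K evaluates the translation of phi with subject x. *)
    rewrite aval_one_point, (tr_term_eval J a rho s d t Hs).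
    set (te := evalT (proj1_sig (slice J d)) (fun n => a (rho n)) t).
    cbn [aval dval evalT map scons fst snd]. fold te.
    destruct (excluded_middle_informative (s_agent Sg te)) as [H|H].
    + rewrite (proj2 (of_prop_T _) (proj2 (Apred_iff J te) H)).
      erewrite <- modal_pi.
      2: { intros J'. apply (IHphi (fun n => S (rho n)) (Var Sg 0) J' (scons te a)
                       (exist _ te H)); reflexivity. }
      destruct (excluded_middle_informative _); [reflexivity|].
      destruct (excluded_middle_informative _); reflexivity.
    + rewrite (proj2 (of_prop_F _) (fun h => H (proj1 (Apred_iff J te) h))). reflexivity.
Qed.
End Translation.

Section Exact.
Variable Sg : Setup.

Lemma dval_exact (Q : DPWS Sg) phi :
  forall I a, dval (Q, Q) I a phi = of_prop (dsat Q I a phi).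
Proof.
  induction phi as [r ts|t1 t2|phi IHphi|phi1 IHphi1 phi2 IHphi2|phi IHphi|t phi IHphi];
    intros I a; simpl; auto.
  - rewrite IHphi, tneg_of; auto.
  - rewrite IHphi1, IHphi2, tmeet_of; auto.
  - rewrite <- tglb_of. apply tglb_ext. intros v; split; intros [d ->]; exists d; auto.
  - destruct (excluded_middle_informative _) as [H|H].
    + rewrite (modal_exact (fun J => IHphi J a)). apply of_prop_iff. split.
      * intros HK; exists H; auto.
      * intros [H' HK]. rewrite (proof_irrelevance _ H H'); auto.
    + symmetry; apply of_prop_F. intros [H' _]; auto.
Qed.

Lemma aval_exact (P : PWS' Sg) phi :
  forall J a, aval (P, P) J a phi = of_prop (asat P J a phi).
Proof.
  induction phi as [r ts|t1 t2|phi IHphi|phi1 IHphi1 phi2 IHphi2|phi IHphi|phi IHphi];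
    intros J a; simpl; auto.
  - rewrite IHphi, tneg_of; auto.
  - rewrite IHphi1, IHphi2, tmeet_of; auto.
  - rewrite <- tglb_of. apply tglb_ext. intros v; split; intros [d ->]; exists d; auto.
  - apply (modal_exact (fun J' => IHphi J' a)).
Qed.

Lemma DopD_exact (T : dtheory Sg) : DopD T = (fun Q => DlD T (Q, Q)).
Proof.
  extensionality Q; extensionality A; extensionality I; apply propositional_extensionality.
  unfold DopD, DlD, dset_sat, dset_val. rewrite tglb_T. split.
  - intros H v [phi [Hp ->]]. rewrite dval_exact; apply of_prop_T; auto.
  - intros H phi Hp. apply of_prop_T. rewrite <- dval_exact. apply H; eauto.
Qed.

Lemma DopA_exact (T : atheory Sg) : DopA T = (fun P => snd (DstarA T (P, P))).
Proof.
  extensionality P; extensionality J; apply propositional_extensionality.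
  unfold DopA, DstarA, aset_sat, aset_val; simpl. rewrite tglb_T. split.
  - intros H v [phi [Hp ->]]. rewrite aval_exact; apply of_prop_T; auto.
  - intros H phi Hp. apply of_prop_T. rewrite <- aval_exact. apply H; eauto.
Qed.
End Exact.

Section Nonempty.
Variable Sg : Setup.

Definition NE (Q : DPWS Sg) : Prop := forall A, exists I, Q A I.

Lemma NE_antitone (Q1 Q2 : DPWS Sg) : leKD Q1 Q2 -> NE Q2 -> NE Q1.
Proof. intros H HN A. destruct (HN A) as [I HI]. exists I; apply H; auto. Qed.

(* The pessimistic replacement of top-level modal subformulas: positive
   occurrences become f, negative ones t (pol is the polarity). *)
Fixpoint worst (phi : dform Sg) (pol : bool) : pform Sg :=
  match phi with
  | DAtom r ts => PAtom r ts
  | DEq t1 t2 => PEq t1 t2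
  | DNeg p => PNeg (worst p (negb pol))
  | DAnd p q => PAnd (worst p pol) (worst q pol)
  | DAll p => PAll (worst p pol)
  | DK t p => PConst Sg (negb pol)
  end.

Lemma worst_repl phi : forall pol, repl phi (worst phi pol).
Proof. induction phi; intros pol; simpl; constructor; auto. Qed.

Lemma worst_bounds (B : DBP Sg) I phi : forall a,
  (psat I a (worst phi true) -> dval B I a phi = tT) /\
  (~ psat I a (worst phi false) -> dval B I a phi = tF).
Proof.
  induction phi as [r ts|t1 t2|phi IHphi|phi1 IHphi1 phi2 IHphi2|phi IHphi|t phi IHphi];
    intros a; simpl.
  - split; intros H; [apply of_prop_T|apply of_prop_F]; auto.
  - split; intros H; [apply of_prop_T|apply of_prop_F]; auto.
  - destruct (IHphi a) as [H1 H2]. split; intros H.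
    + rewrite H2; auto.
    + rewrite H1; auto. apply NNPP; auto.
  - destruct (IHphi1 a) as [H1 H2], (IHphi2 a) as [H3 H4]. split; intros H.
    + rewrite H1, H3; tauto.
    + destruct (classic (psat I a (worst phi1 false))).
      * rewrite H4; [destruct (dval B I a phi1); reflexivity|tauto].
      * rewrite H2; auto.
  - split; intros H.
    + apply tglb_T. intros v [d ->]. apply (IHphi (scons d a)); auto.
    + apply tglb_F. apply not_all_ex_not in H. destruct H as [d Hd].
      exists d. symmetry; apply (IHphi (scons d a)); auto.
  - split; intros H; [discriminate|exfalso; auto].
Qed.

(* For a permaconsistent theory, whatever the beliefs, every agent has a
   structure where its theory is true: a model of its pessimistic replacement. *)
Lemma NE_Dl (T : dtheory Sg) B : permaconsistent T -> NE (DlD T B).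
Proof.
  intros HP A. destruct (HP A (fun phi => worst phi true)) as [I HI].
  { intros; apply worst_repl. }
  exists I. unfold DlD, dset_val. apply tglb_T. intros v [phi [Hphi ->]].
  apply worst_bounds; auto.
Qed.

Lemma NE_Dc (T : dtheory Sg) B : permaconsistent T -> NE (DcD T B).
Proof.
  intros HP A. destruct (NE_Dl B HP A) as [I HI]. exists I. unfold DcD, DlD in *.
  rewrite HI; discriminate.
Qed.
End Nonempty.

Section Operators.
Variable Sg : Setup.
Variable T : dtheory Sg.

Lemma aval_tau (P0 S0 : PWS' Sg) (A : Agent Sg) (phi : dform Sg) J :
  aval (P0, S0) J (a0 Sg) (tau_formula (agent_term A) phi) =
  dval (pi P0, pi S0) (slice J A) (a0 Sg) phi.
Proof.
  apply aval_tr_form. simpl. destruct (proj2_sig J) as [H1 _].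
  destruct A as [x Hx]; simpl. rewrite H1.
  - apply s_agentC_int; auto.
  - unfold arF'; rewrite s_agentC_obj, s_agentC_ar; auto.
  - apply s_agentC_obj; auto.
Qed.

Lemma DcA_tau P0 S0 :
  fst (DstarA (tau_theory T) (P0, S0)) = tau_pws (DcD T (pi P0, pi S0)).
Proof.
  extensionality J; apply propositional_extensionality. rewrite tau_char.
  unfold DstarA, DcD, aset_val, dset_val; simpl. rewrite tglb_F. split.
  - intros H A HA. rewrite tglb_F in HA. destruct HA as [phi [Hp Hv]].
    apply H. exists (tau_formula (agent_term A) phi). split; [exists A, phi; auto|].
    rewrite aval_tau; auto.
  - intros H [psi [[A [phi [Hp ->]]] Hv]]. apply (H A). rewrite tglb_F.
    exists phi; split; auto. rewrite <- aval_tau; auto.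
Qed.

Lemma DlA_tau P0 S0 :
  snd (DstarA (tau_theory T) (P0, S0)) = tau_pws (DlD T (pi P0, pi S0)).
Proof.
  extensionality J; apply propositional_extensionality. rewrite tau_char.
  unfold DstarA, DlD, aset_val, dset_val; simpl. rewrite tglb_T. split.
  - intros H A. apply tglb_T. intros v [phi [Hp ->]].
    rewrite <- aval_tau. apply H. exists (tau_formula (agent_term A) phi). split; auto.
    exists A, phi; auto.
  - intros H v [psi [[A [phi [Hp ->]]] ->]]. specialize (H A). rewrite tglb_T in H.
    rewrite aval_tau. apply H; eauto.
Qed.

Lemma DstarA_tau P0 S0 : DstarA (tau_theory T) (P0, S0) =
  (tau_pws (DcD T (pi P0, pi S0)), tau_pws (DlD T (pi P0, pi S0))).
Proof. rewrite (surjective_pairing (DstarA _ _)), DcA_tau, DlA_tau; auto. Qed.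
End Operators.

Section Embedding.
Variable Sg : Setup.

Lemma choose_fam (Q : DPWS Sg) :
  NE Q -> exists f : Agent Sg -> structure Sg, forall A, Q A (f A).
Proof.
  intros H. exists (fun A => proj1_sig (constructive_indefinite_description _ (H A))).
  intros A; exact (proj2_sig (constructive_indefinite_description _ (H A))).
Qed.

(* pi is a left inverse of tau_pws on nonempty DPWSs: a structure I possible
   for A is the A-slice of tau_structure of a family passing through I. *)
Lemma pi_tau (Q : DPWS Sg) : NE Q -> pi (tau_pws Q) = Q.
Proof.
  intros HQ. extensionality A; extensionality I; apply propositional_extensionality. split.
  - intros [J [HJ <-]]. rewrite tau_char in HJ; auto.
  - intros HI. destruct (choose_fam HQ) as [f Hf].
    set (fam := fun B => if excluded_middle_informative (B = A) then I else f B).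
    exists (tau_s fam). rewrite tau_char, slice_tau. unfold fam. split.
    + intros B. rewrite slice_tau. destruct (excluded_middle_informative (B = A)) as [->|]; auto.
    + destruct (excluded_middle_informative (A = A)); tauto.
Qed.

Lemma tau_mono (Q1 Q2 : DPWS Sg) : leKD Q1 Q2 -> leK (tau_pws Q1) (tau_pws Q2).
Proof. intros H J HJ. rewrite tau_char in *. intros A; apply H; auto. Qed.

Lemma tau_reflect (Q1 Q2 : DPWS Sg) :
  NE Q2 -> leK (tau_pws Q1) (tau_pws Q2) -> leKD Q1 Q2.
Proof.
  intros HN H A I HI. rewrite <- (pi_tau HN) in HI. destruct HI as [J [HJ <-]].
  apply H in HJ. rewrite tau_char in HJ; auto.
Qed.
End Embedding.

Theorem mainTheorem2 (Sg : Setup) (T : dtheory Sg) :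
  dtheory_wf T ->
  permaconsistent T ->
  (forall Q : DPWS Sg, dSup T Q <-> aSup (tau_theory T) (tau_pws Q)) /\
  (forall B : DBP Sg, dconsistent B ->
      (dKK T B <-> aKK (tau_theory T) (tau_bp B))) /\
  (forall B : DBP Sg, dconsistent B ->
      (dPSt T B <-> aPSt (tau_theory T) (tau_bp B))) /\
  (forall Q : DPWS Sg, dSt T Q <-> aSt (tau_theory T) (tau_pws Q)) /\
  (forall B : DBP Sg, dconsistent B ->
      (dWF T B <-> aWF (tau_theory T) (tau_bp B))).
Proof.
  intros _ HP.
  assert (le_refl : forall Q : DPWS Sg, leKD Q Q) by (intros Q A I; auto).
  pose proof (@NE_antitone Sg) as good_antitone.
  pose proof (@pi_tau Sg) as proj_emb.
  pose proof (@tau_mono Sg) as emb_mono.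
  pose proof (@tau_reflect Sg) as emb_reflect.
  pose proof (fun B => NE_Dc B HP) as good_Dc.
  pose proof (fun B => NE_Dl B HP) as good_Dl.
  pose proof (DstarA_tau T) as Dstar_eq.
  split; [|split; [|split; [|split]]].
  - intros Q. unfold dSup, aSup. rewrite DopD_exact, DopA_exact.
    exact (sup_transfer le_refl good_antitone proj_emb emb_mono emb_reflect good_Dl Dstar_eq Q).
  - intros B _. exact (kk_transfer le_refl good_antitone proj_emb emb_mono emb_reflect
                         good_Dc good_Dl Dstar_eq B).
  - intros B _. exact (pst_transfer le_refl good_antitone proj_emb emb_mono emb_reflect
                         good_Dc Dstar_eq B).
  - exact (st_transfer le_refl good_antitone proj_emb emb_mono emb_reflect good_Dc Dstar_eq).
  - intros B _. exact (wf_transfer le_refl good_antitone proj_emb emb_mono emb_reflect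
                         good_Dc Dstar_eq B).
Qed.
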